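(* Let $K$ be an algebraically closed field of characteristic zero, $m,n\ge1$, and let $G$ be a differential ideal of $K[[t_1,\ldots,t_m]]\{x_1,\ldots,x_n\}$. If $\varphi\in K[[t_1,\ldots,t_m]]^n$ is a solution of $G$ (i.e. $P(\varphi)=0$ for all $P\in G$), then $\operatorname{Supp}(\varphi)$ is a solution of $\operatorname{trop}(G)$.
   Context: Notation: $t^J=t_1^{j_1}\cdots t_m^{j_m}$, $\|J\|_\infty=\max_i j_i$, $\Theta(J)=\partial_{t_1}^{j_1}\cdots\partial_{t_m}^{j_m}$. $K[[t_1,\ldots,t_m]]\{x_1,\ldots,x_n\}$ is the polynomial ring over $K[[t_1,\ldots,t_m]]$ in the indeterminates $x_{i,J}$ ($1\le i\le n$, $J\in\mathbb{Z}_{\ge0}^m$), with derivations $\partial_{t_k}$ extended by $\partial_{t_k}x_{i,J}=x_{i,J+e_k}$; a differential ideal is an ideal stable under these derivations. For $\varphi\in K[[t]]^n$, $P(\varphi)$ is obtained by substituting $\Theta(J)\varphi_i$ for $x_{i,J}$. Every $P$ can be written $P=\sum_{M\in\Delta}\alpha_ME_M$ with $\Delta$ finite, $\alpha_M\in K[[t]]$, and differential monomials $E_M=\prod_{i,\|J\|_\infty\le r}x_{i,J}^{M_{i,J}}$. $\operatorname{Supp}(\sum a_Jt^J)=\{J:a_J\ne0\}$, applied componentwise to tuples. For $X\subseteq\mathbb{Z}_{\ge0}^m$, $\mathcal{N}(X)$ is the convex hull in $\mathbb{R}^m$ of $X+\mathbb{Z}_{\ge0}^m$, $x\in X$ is a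 vertex if $x\notin\mathcal{N}(X\setminus\{x\})$, $\operatorname{Vert}(X)$ is the set of vertices; $\operatorname{trop}(\psi)=\operatorname{Vert}(\operatorname{Supp}\psi)$ for $\psi\in K[[t]]$. Vertex sets form a semiring with $S\oplus T=\operatorname{Vert}(S\cup T)$, $S\odot T=\operatorname{Vert}(S+T)$ (Minkowski sum). $\Theta_{\operatorname{trop}}(J)T=\{(s_1-j_1,\ldots,s_m-j_m):(s_i)\in T, s_i\ge j_i\ \forall i\}$. For $S=(S_1,\dots,S_n)$ subsets of $\mathbb{Z}_{\ge0}^m$, the tropical monomial $\epsilon_M$ evaluates as $\epsilon_M(S)=\operatorname{Vert}\bigl(\sum_{i,J}M_{i,J}\Theta_{\operatorname{trop}}(J)S_i\bigr)$ (Minkowski sums, $kX$ the $k$-fold sum, $0X=\{0\}$). The tropicalization of $P=\sum_{M\in\Delta}\alpha_ME_M$ is the tropical differential polynomial $p=\operatorname{trop}(P)=\bigoplus_{M\in\Delta}a_M\odot\epsilon_M$ with $a_M=\operatorname{trop}(\alpha_M)$ (terms with $\alpha_M=0$ omitted), evaluated as $p(S)=\operatorname{Vert}\bigl(\bigcup_{M\in\Delta}(a_M+\epsilon_M(S))\bigr)$. $S$ is a solution of $p$ if for every $J\in p(S)$ there are $M_1\neq M_2$ in $\Delta$ with $J\in a_{M_1}\odot\epsilon_{M_1}(S)$ and $J\in a_{M_2}\odot\epsilon_{M_2}(S)$ (so if $p(S)=\emptyset$, $S$ is a solution). $\operatorname{trop}(G)=\{\operatorname{trop}(P):P\in G\}$,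 and $S$ is a solution of $\operatorname{trop}(G)$ if it is a solution of every element. *)

From Stdlib Require Import Reals List.
From HB Require Import structures.
From mathcomp Require Import all_boot all_order all_algebra.
Set Implicit Arguments. Unset Strict Implicit. Unset Printing Implicit Defensive.
Import GRing.Theory.
Local Open Scope ring_scope.

Definition mi (m : nat) := {ffun 'I_m -> nat}.
Definition mi0 {m : nat} : mi m := [ffun _ => 0%N].
Definition miadd {m : nat} (I J : mi m) : mi m := [ffun i => (I i + J i)%N].
Definition miunit {m : nat} (k : 'I_m) : mi m := [ffun j => nat_of_bool (j == k)].

Definition ps (K : fieldType) (m : nat) := mi m -> K.

Section PS.
Variables (K : fieldType) (m : nat).
Definition ps0 : ps K m := fun _ => 0.
Definition ps1 : ps K m := fun J => (J == mi0)%:R.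
Definition psadd (f g : ps K m) : ps K m := fun J => f J + g J.
(* Cauchy product: coefficient of t^J is sum_{I <= J} f_I g_{J-I} *)
Definition psmul (f g : ps K m) : ps K m := fun J =>
  \sum_(I : {ffun 'I_m -> 'I_(\sum_(i < m) J i)%N.+1} | [forall i, (I i <= J i)%N])
     f [ffun i => nat_of_ord (I i)] * g [ffun i => (J i - I i)%N].
Definition psder (k : 'I_m) (f : ps K m) : ps K m :=
  fun J => (J k).+1%:R * f (miadd J (miunit k)).
Definition psTheta (J : mi m) (f : ps K m) : ps K m :=
  foldr (fun k g => iter (J k) (psder k) g) f (enum 'I_m).
End PS.

(* a variable x_{i,J} *)
Definition dvar (m n : nat) := ('I_n * mi m)%type.
(* a differential monomial E_M, as the multiset (list up to permutation)
   of its variables, counted with multiplicity *)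
Definition dmonom (m n : nat) := seq (dvar m n).
(* a differential polynomial, as a formal finite sum of terms alpha * E_M *)
Definition dpoly (K : fieldType) (m n : nat) := seq (ps K m * dmonom m n).

Section DPoly.
Variables (K : fieldType) (m n : nat).
Local Notation dpoly := (dpoly K m n).
Local Notation dmonom := (dmonom m n).

Definition dcoef (P : dpoly) (M : dmonom) : ps K m :=
  fun J => \sum_(c <- P | perm_eq c.2 M) c.1 J.
(* equality in the ring K[[t]]{x} *)
Definition dpequiv (P Q : dpoly) : Prop :=
  forall M J, dcoef P M J = dcoef Q M J.
Definition dpadd (P Q : dpoly) : dpoly := P ++ Q.
Definition dpmul (P Q : dpoly) : dpoly :=
  [seq (psmul c.1 d.1, c.2 ++ d.2) | c <- P, d <- Q].
(* d_{t_k} x_{i,J} = x_{i,J+e_k} *)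
Definition dvshift (k : 'I_m) (v : dvar m n) : dvar m n := (v.1, miadd v.2 (miunit k)).
(* Leibniz rule on a monomial: list of monomials of d_{t_k} E_M *)
Fixpoint dmder (k : 'I_m) (M : dmonom) : seq dmonom :=
  match M with
  | [::] => [::]
  | v :: M' => (dvshift k v :: M') :: [seq v :: N | N <- dmder k M']
  end.
Definition dpder (k : 'I_m) (P : dpoly) : dpoly :=
  flatten [seq (psder k c.1, c.2) :: [seq (c.1, N) | N <- dmder k c.2] | c <- P].

(* differential ideal (as a set of ring elements, closed under ring equality) *)
Definition is_diff_ideal (G : dpoly -> Prop) : Prop :=
  [/\ G [::],
      (forall P Q, G P -> G Q -> G (dpadd P Q)),
      (forall P Q, G P -> G (dpmul Q P)),
      (forall k P, G P -> G (dpder k P)) &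
      (forall P Q, G P -> dpequiv P Q -> G Q)].

Definition dmeval (phi : 'I_n -> ps K m) (M : dmonom) : ps K m :=
  foldr (fun v acc => psmul (psTheta v.2 (phi v.1)) acc) (@ps1 K m) M.
Definition dpeval (P : dpoly) (phi : 'I_n -> ps K m) : ps K m :=
  foldr (fun c acc => psadd (psmul c.1 (dmeval phi c.2)) acc) (@ps0 K m) P.
End DPoly.

Definition iset (m : nat) := mi m -> Prop.

Section Trop.
Variable m : nat.

(* x in N(X) = conv(X + Z_{>=0}^m) in R^m, for an integer point x *)
Definition inNewton (X : iset m) (x : mi m) : Prop :=
  exists l : list (R * mi m),
    Forall (fun c : R * mi m => Rle R0 (fst c) /\
                     exists y, X y /\ forall i, (y i <= (snd c) i)%N) l /\
    fold_right (fun (c : R * mi m) acc => Rplus (fst c) acc) R0 l = R1 /\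
    forall i, INR (x i) =
      fold_right (fun (c : R * mi m) acc => Rplus (Rmult (fst c) (INR ((snd c) i))) acc) R0 l.

Definition Vert (X : iset m) : iset m :=
  fun x => X x /\ ~ inNewton (fun y => X y /\ y <> x) x.

Definition Supp (K : fieldType) (psi : ps K m) : iset m := fun J => psi J <> 0.
Definition tropc (K : fieldType) (psi : ps K m) : iset m := Vert (Supp psi).

Definition minkowski (A B : iset m) : iset m :=
  fun J => exists I1 I2, A I1 /\ B I2 /\ J = miadd I1 I2.
Definition ThetaTrop (J : mi m) (T : iset m) : iset m :=
  fun I => exists s, T s /\ (forall i, (J i <= s i)%N) /\ I = [ffun i => (s i - J i)%N].
End Trop.

Section TropPoly.
Variables (K : fieldType) (m n : nat).

Definition epsM (S : 'I_n -> iset m) (M : dmonom m n) : iset m :=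
  Vert (foldr (fun v A => minkowski (ThetaTrop v.2 (S v.1)) A) (fun J => J = mi0) M).
Definition tterm (P : dpoly K m n) (S : 'I_n -> iset m) (M : dmonom m n) : iset m :=
  minkowski (tropc (dcoef P M)) (epsM S M).
Definition nzps (psi : ps K m) : Prop := exists J, psi J <> 0.
Definition tropEval (P : dpoly K m n) (S : 'I_n -> iset m) : iset m :=
  Vert (fun J => exists M, nzps (dcoef P M) /\ tterm P S M J).
Definition tropSol (P : dpoly K m n) (S : 'I_n -> iset m) : Prop :=
  forall J, tropEval P S J ->
    exists M1 M2, ~~ perm_eq M1 M2 /\ nzps (dcoef P M1) /\ nzps (dcoef P M2) /\
      Vert (tterm P S M1) J /\ Vert (tterm P S M2) J.
End TropPoly.

From Stdlib Require Import Reals Lra List Classical FunctionalExtensionality.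
From HB Require Import structures.
From mathcomp Require Import all_boot all_order all_algebra.
From mathcomp Require Import zify.
Set Implicit Arguments. Unset Strict Implicit.
Import GRing.Theory.

(* Fix a vertex J of trop(P)(S), S = Supp(phi), and a term M0 of P with J in a_M0 + eps_M0(S).
   Since J is a vertex, the coefficient of t^J in alpha_M0 E_M0(phi) is a single product of
   nonzero coefficients: in characteristic zero Supp(Theta(J) phi_i) = Theta_trop(J) Supp(phi_i),
   and a second factorisation of J would exhibit it as a midpoint in the Minkowski sum. As
   P(phi) = 0, some other monomial class M1 has a nonzero coefficient at t^J; its support lies in
   the Newton polyhedron of a_M1 + eps_M1(S) (every set lies in the Newton polyhedron of its
   vertices, by Dickson's lemma), so J is a vertex of that set too. *)

Lemma size_filter_predC1 (T : eqType) (s : seq T) x :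
  x \in s -> (size (filter (predC1 x) s) < size s)%N.
Proof.
  move=> hx; rewrite size_filter -(count_predC (predC1 x) s) -addn1 leq_add2l.
  rewrite (@eq_count _ _ (pred1 x)); last by move=> z; rewrite /= negbK.
  by rewrite -has_count has_pred1.
Qed.

Section NewtonPolyhedra.
Variable m : nat.
Local Open Scope R_scope.
Implicit Types (X Y Z U : iset m) (l r : list (R * mi m)).

Definition total_weight l : R := fold_right (fun (c : R * mi m) acc => fst c + acc) 0 l.
Definition weighted_sum l (i : 'I_m) : R :=
  fold_right (fun (c : R * mi m) acc => fst c * INR (snd c i) + acc) 0 l.
Definition nonneg_weights l := Forall (fun c : R * mi m => 0 <= fst c) l.
Definition above Y l :=
  Forall (fun c : R * mi m => 0 <= fst c /\ exists y, Y y /\ forall i, (y i <= snd c i)%N) l.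

(* [scaled_newton Y w x]: the real point [x] lies in [w * N(Y) + R_{>=0}^m]; the recession
   part is kept separate so that the weight [w] may be [0]. *)
Definition scaled_newton Y (w : R) (x : 'I_m -> R) :=
  exists l r, above Y l /\ nonneg_weights r /\ total_weight l = w /\
              forall i, x i = weighted_sum l i + weighted_sum r i.

Definition scale_weights (a : R) l := List.map (fun c : R * mi m => (a * fst c, snd c)) l.
Definition shift_points (N : nat) (d : mi m) l :=
  List.map (fun c : R * mi m => (fst c, [ffun i => (snd c i + N * d i)%N] : mi m)) l.

Lemma total_weight_app l1 l2 : total_weight (l1 ++ l2) = total_weight l1 + total_weight l2.
Proof. induction l1 as [|c l IH]; unfold total_weight in *; simpl in *; lra. Qed.

Lemma weighted_sum_app l1 l2 i :
  weighted_sum (l1 ++ l2) i = weighted_sum l1 i + weighted_sum l2 i.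
Proof. induction l1 as [|c l IH]; unfold weighted_sum in *; simpl in *; lra. Qed.

Lemma total_weight_scale a l : total_weight (scale_weights a l) = a * total_weight l.
Proof. induction l as [|c l IH]; unfold total_weight in *; simpl; lra. Qed.

Lemma weighted_sum_scale a l i : weighted_sum (scale_weights a l) i = a * weighted_sum l i.
Proof. induction l as [|c l IH]; unfold weighted_sum in *; simpl; lra. Qed.

Lemma total_weight_shift N d l : total_weight (shift_points N d l) = total_weight l.
Proof. induction l as [|c l IH]; unfold total_weight in *; simpl; lra. Qed.

Lemma weighted_sum_shift N d l i :
  weighted_sum (shift_points N d l) i = weighted_sum l i + total_weight l * (INR N * INR (d i)).
Proof.
  induction l as [|c l IH]; unfold weighted_sum, total_weight in *; simpl; [lra|].
  rewrite IH ffunE plus_INR mult_INR; lra.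
Qed.

Lemma above_scale Y a l : 0 <= a -> above Y l -> above Y (scale_weights a l).
Proof.
  intros Ha H; induction H as [|c l [Hc Hy] _ IH]; simpl; constructor; auto.
  split; auto; simpl; apply Rmult_le_pos; auto.
Qed.

Lemma nonneg_weights_scale a l : 0 <= a -> nonneg_weights l -> nonneg_weights (scale_weights a l).
Proof. intros Ha H; induction H; simpl; constructor; auto; simpl; apply Rmult_le_pos; auto. Qed.

Lemma above_shift Y N d l : above Y l -> above Y (shift_points N d l).
Proof.
  intro H; induction H as [|c l [Hc [y [Hy Hle]]] _ IH]; simpl; constructor; auto.
  split; auto; exists y; split; auto.
  intro i; simpl; rewrite ffunE; apply (leq_trans (Hle i)); apply leq_addr.
Qed.

Lemma above_mono Y Z l : (forall y, Y y -> Z y) -> above Y l -> above Z l.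
Proof.
  intros HYZ; apply Forall_impl; intros c [Hc [y [Hy Hle]]]; split; auto; exists y; auto.
Qed.

Lemma above_nonneg_weights Y l : above Y l -> nonneg_weights l.
Proof. apply Forall_impl; intros c [Hc _]; auto. Qed.

Lemma total_weight_ge0 l : nonneg_weights l -> 0 <= total_weight l.
Proof. intro H; induction H; unfold total_weight in *; simpl; lra. Qed.

Lemma weighted_sum_ge0 l i : nonneg_weights l -> 0 <= weighted_sum l i.
Proof.
  intro H; induction H as [|c l Hc _ IH]; unfold weighted_sum in *; simpl; [lra|].
  assert (0 <= fst c * INR (snd c i)) by (apply Rmult_le_pos; [|apply pos_INR]; auto). lra.
Qed.

Lemma INR_subn (a b : nat) : (b <= a)%N -> INR (a - b)%N = INR a - INR b.
Proof. intro H; apply minus_INR; apply/leP; auto. Qed.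

Lemma scaled_newton_ext Y w x w' x' :
  scaled_newton Y w x -> w = w' -> (forall i, x i = x' i) -> scaled_newton Y w' x'.
Proof.
  intros [l [r [Hl [Hr [Hw Hx]]]]] <- Hxx; exists l, r; repeat split; auto.
  intro i; rewrite <- Hxx; auto.
Qed.

Lemma scaled_newton0 Y : scaled_newton Y 0 (fun _ => 0).
Proof.
  exists nil, nil; split; [constructor|split; [constructor|split; [reflexivity|]]].
  intro i; unfold weighted_sum; simpl; lra.
Qed.

Lemma scaled_newtonD Y w x w' x' : scaled_newton Y w x -> scaled_newton Y w' x' ->
  scaled_newton Y (w + w') (fun i => x i + x' i).
Proof.
  intros [l [r [Hl [Hr [Hw Hx]]]]] [l' [r' [Hl' [Hr' [Hw' Hx']]]]].
  exists (l ++ l'), (r ++ r'); repeat split.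
  - apply Forall_app; auto.
  - apply Forall_app; auto.
  - rewrite total_weight_app; subst; auto.
  - intro i; rewrite !weighted_sum_app Hx Hx'; lra.
Qed.

Lemma scaled_newtonZ Y a w x : 0 <= a -> scaled_newton Y w x ->
  scaled_newton Y (a * w) (fun i => a * x i).
Proof.
  intros Ha [l [r [Hl [Hr [Hw Hx]]]]].
  exists (scale_weights a l), (scale_weights a r); repeat split.
  - apply above_scale; auto.
  - apply nonneg_weights_scale; auto.
  - rewrite total_weight_scale; subst; auto.
  - intro i; rewrite !weighted_sum_scale Hx; lra.
Qed.

Lemma scaled_newton_recession Y a (d : mi m) : 0 <= a -> scaled_newton Y 0 (fun i => a * INR (d i)).
Proof.
  intros Ha; exists nil, ((a, d) :: nil).
  split; [constructor|split; [constructor; [exact Ha|constructor]|split; [reflexivity|]]].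
  intro i; unfold weighted_sum; simpl; lra.
Qed.

Lemma scaled_newton_shift Y w x (d : mi m) :
  scaled_newton Y w x -> scaled_newton Y w (fun i => x i + INR (d i)).
Proof.
  intro H; eapply scaled_newton_ext;
    [apply (scaled_newtonD H (@scaled_newton_recession Y 1 d ltac:(lra)))|lra|].
  intro i; simpl; lra.
Qed.

Lemma scaled_newton_mono Y Z w x : (forall y, Y y -> Z y) ->
  scaled_newton Y w x -> scaled_newton Z w x.
Proof.
  intros HYZ [l [r [Hl [Hr [Hw Hx]]]]]; exists l, r; repeat split; auto.
  eapply above_mono; eauto.
Qed.

Lemma scaled_newton_ge0 Y w x : scaled_newton Y w x -> 0 <= w /\ forall i, 0 <= x i.
Proof.
  intros [l [r [Hl [Hr [Hw Hx]]]]]; have Hl' := above_nonneg_weights Hl; split.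
  - subst; apply total_weight_ge0; auto.
  - intro i; rewrite Hx.
    have := weighted_sum_ge0 i Hl'; have := weighted_sum_ge0 i Hr; lra.
Qed.

Lemma scaled_newton_point Y y (p : mi m) : Y y -> (forall i, (y i <= p i)%N) ->
  scaled_newton Y 1 (fun i => INR (p i)).
Proof.
  intros Hy Hle; exists ((1, p) :: nil), nil; split; [|split; [constructor|split]].
  - constructor; [|constructor]; split; [simpl; lra|exists y; auto].
  - unfold total_weight; simpl; lra.
  - intro i; unfold weighted_sum; simpl; lra.
Qed.

(* With positive weight, each recession vector [e * d] is absorbed by moving the points
   [N * d] further out for some large [N]. *)
Lemma scaled_newton_absorb Y w x : scaled_newton Y w x -> 0 < w ->
  exists l, above Y l /\ total_weight l = w /\ forall i, x i = weighted_sum l i.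
Proof.
  intros [l [r [Hl [Hr [Hw Hx]]]]] Hw0.
  revert l x Hl Hw Hx; induction r as [|[e d] r IH]; intros l x Hl Hw Hx.
  - exists l; repeat split; auto. intro i; rewrite Hx; unfold weighted_sum at 2; simpl; lra.
  - inversion Hr as [|c r' He Hr']; subst; simpl in He.
    destruct (INR_archimed (total_weight l) (e + 1) Hw0) as [N HN].
    assert (HN0 : 0 < INR N).
    { destruct (Rle_or_lt (INR N) 0) as [h|h]; auto.
      assert (INR N * total_weight l <= 0) by nra. lra. }
    set (t := e / (total_weight l * INR N)).
    assert (Hpos : 0 < total_weight l * INR N) by (apply Rmult_lt_0_compat; lra).
    assert (Ht0 : 0 <= t) by (apply Rle_mult_inv_pos; auto).
    assert (Ht1 : t <= 1).
    { apply (Rmult_le_reg_r _ _ _ Hpos); unfold t, Rdiv.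
      rewrite Rmult_assoc Rinv_l; lra. }
    apply (IH Hr' (scale_weights (1 - t) l ++ scale_weights t (shift_points N d l)) x).
    + apply Forall_app; split; apply above_scale; try lra; auto; apply above_shift; auto.
    + rewrite total_weight_app !total_weight_scale total_weight_shift; lra.
    + intro i; rewrite Hx weighted_sum_app !weighted_sum_scale weighted_sum_shift.
      unfold weighted_sum at 2; simpl; fold (weighted_sum r i).
      assert (t * (total_weight l * (INR N * INR (d i))) = e * INR (d i))
        by (unfold t; field; lra).
      nra.
Qed.

Lemma inNewtonE Y (x : mi m) : inNewton Y x <-> scaled_newton Y 1 (fun i => INR (x i)).
Proof.
  split.
  - intros [l [Hl [Hw Hx]]]; exists l, nil; repeat split; try constructor; auto.
    intro i; rewrite Hx; unfold weighted_sum at 2; simpl; rewrite Rplus_0_r; reflexivity.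
  - intro H; destruct (scaled_newton_absorb H) as [l [Hl [Hw Hx]]]; [lra|].
    exists l; repeat split; auto.
Qed.

Lemma inNewton_mono Y Z (x : mi m) :
  (forall y, Y y -> Z y) -> inNewton Y x -> inNewton Z x.
Proof. intros H; rewrite !inNewtonE; apply scaled_newton_mono; auto. Qed.

Lemma inNewton_dom Y (y x : mi m) : Y y -> (forall i, (y i <= x i)%N) -> inNewton Y x.
Proof. intros Hy Hle; apply inNewtonE; eapply scaled_newton_point; eauto. Qed.

Lemma inNewton_self Y (x : mi m) : Y x -> inNewton Y x.
Proof. intro Hx; apply (inNewton_dom Hx); auto. Qed.

Lemma scaled_newton_above Y Z l : above Y l -> (forall y, Y y -> inNewton Z y) ->
  scaled_newton Z (total_weight l) (weighted_sum l).
Proof.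
  intros H HYZ; induction H as [|[c p] l [Hc [y [Hy Hle]]] _ IH].
  - eapply scaled_newton_ext; [apply scaled_newton0|reflexivity|reflexivity].
  - simpl in *.
    assert (Hp : scaled_newton Z 1 (fun i => INR (p i))).
    { eapply scaled_newton_ext;
        [apply (scaled_newton_shift [ffun i => (p i - y i)%N] (proj1 (inNewtonE _ _) (HYZ y Hy)))
        |reflexivity|].
      intro i; simpl; rewrite ffunE INR_subn; [lra|auto]. }
    eapply scaled_newton_ext;
      [apply (scaled_newtonD (scaled_newtonZ Hc Hp) IH)|unfold total_weight; simpl; lra|].
    intro i; unfold weighted_sum; simpl; lra.
Qed.

Lemma inNewton_trans Y Z (x : mi m) :
  inNewton Y x -> (forall y, Y y -> inNewton Z y) -> inNewton Z x.
Proof.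
  intros [l [Hl [Hw Hx]]] HYZ; apply inNewtonE.
  eapply scaled_newton_ext; [apply (scaled_newton_above Hl HYZ)|auto|].
  intro i; rewrite Hx; reflexivity.
Qed.

Lemma inNewton_translate Y (b y : mi m) : inNewton Y y ->
  inNewton (fun z => exists y', Y y' /\ z = miadd b y') (miadd b y).
Proof.
  intros [l [Hl [Hw Hx]]]; exists (shift_points 1 b l); repeat split.
  - clear Hw Hx; induction Hl as [|[c p] l [Hc [y' [Hy Hle]]] _ IH]; simpl; constructor; auto.
    split; auto; exists (miadd b y'); split; [exists y'; auto|].
    intro i; simpl; rewrite !ffunE mul1n addnC leq_add2r; auto.
  - change (total_weight (shift_points 1 b l) = 1); rewrite total_weight_shift; auto.
  - intro i; change (INR (miadd b y i) = weighted_sum (shift_points 1 b l) i).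
    rewrite weighted_sum_shift; change (total_weight l = 1) in Hw.
    rewrite Hw ffunE plus_INR; specialize (Hx i); simpl in Hx |- *.
    change (INR (y i) = weighted_sum l i) in Hx; lra.
Qed.

Lemma miaddC (x y : mi m) : miadd x y = miadd y x.
Proof. apply/ffunP => i; rewrite !ffunE; apply addnC. Qed.

Lemma miaddI (b x y : mi m) : miadd b x = miadd b y -> x = y.
Proof. by move/ffunP => h; apply/ffunP => j; move: (h j); rewrite !ffunE => /addnI. Qed.

Lemma inNewton_minkowski X Y (x y : mi m) : inNewton X x -> inNewton Y y ->
  inNewton (minkowski X Y) (miadd x y).
Proof.
  intros Hx Hy; rewrite miaddC; apply (inNewton_trans (inNewton_translate y Hx)).
  intros z [x' [Hx' ->]]; rewrite miaddC.
  eapply inNewton_mono; [|apply (inNewton_translate x' Hy)].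
  intros z [y' [Hy' ->]]; exists x', y'; auto.
Qed.

Definition setD1 X (J : mi m) : iset m := fun y => X y /\ y <> J.

Lemma above_split_point U (J : mi m) l : above U l ->
  exists lam v, 0 <= lam /\ scaled_newton (setD1 U J) (total_weight l - lam) v /\
    forall i, weighted_sum l i = lam * INR (J i) + v i.
Proof.
  intro H; induction H as [|[c p] l [Hc [y [Hy Hle]]] _ IH].
  - exists 0, (fun _ => 0); split; [lra|split].
    + eapply scaled_newton_ext; [apply scaled_newton0|unfold total_weight; simpl; lra|reflexivity].
    + intro i; unfold weighted_sum; simpl; lra.
  - destruct IH as [lam [v [H0 [HR Hv]]]]; simpl in *.
    destruct (classic (y = J)) as [->|Hne].
    + exists (c + lam), (fun i => c * INR ([ffun j => (p j - J j)%N] i) + v i).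
      split; [lra|split].
      * eapply scaled_newton_ext;
          [apply (scaled_newtonD (scaled_newton_recession (setD1 U J) [ffun j => (p j - J j)%N] Hc) HR)
          |unfold total_weight; simpl; fold (total_weight l); lra|reflexivity].
      * intro i; unfold weighted_sum; simpl; fold (weighted_sum l i).
        rewrite Hv ffunE INR_subn; auto; lra.
    + exists lam, (fun i => 1 * c * INR (p i) + v i); split; [lra|split].
      * assert (Hp : scaled_newton (setD1 U J) 1 (fun i => INR (p i)))
          by (apply (scaled_newton_point (y:=y)); [split|]; auto).
        eapply scaled_newton_ext; [apply (scaled_newtonD (scaled_newtonZ Hc Hp) HR)
          |unfold total_weight; simpl; fold (total_weight l); lra|].
        intro i; simpl; lra.
      * intro i; unfold weighted_sum; simpl; fold (weighted_sum l i); rewrite Hv; lra.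
Qed.

Lemma ffun_neq (y J : mi m) : y <> J -> exists i, y i <> J i.
Proof.
  intro H; apply NNPP; intro H'; apply H; apply/ffunP => i.
  apply NNPP; intro H2; apply H'; exists i; auto.
Qed.

Lemma inNewton_split_point U (J p y : mi m) :
  inNewton U y -> y <> J -> (forall i, (y i <= p i)%N) ->
  exists lam v, 0 <= lam /\ scaled_newton (setD1 U J) (1 - lam) v /\
    (forall i, INR (p i) = lam * INR (J i) + v i) /\ (lam < 1 \/ exists i, 0 < v i).
Proof.
  intros [l [Hl [Hw Hx]]] Hne Hle.
  change (total_weight l = 1) in Hw.
  assert (Hy : forall i, INR (y i) = weighted_sum l i) by exact Hx.
  destruct (above_split_point J Hl) as [lam [v0 [H0 [HR Hv0]]]]; rewrite Hw in HR.
  destruct (scaled_newton_ge0 HR) as [Hw0 Hv0n].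
  exists lam, (fun i => v0 i + INR ([ffun j => (p j - y j)%N] i)).
  split; [lra|split; [apply scaled_newton_shift; auto|split]].
  - intro i; rewrite ffunE INR_subn; auto; rewrite Hy Hv0; lra.
  - destruct (Rlt_or_le lam 1) as [h|h]; [left; auto|right].
    destruct (ffun_neq Hne) as [i Hi]; exists i.
    assert (lam = 1) by lra; subst lam.
    assert (Hv : v0 i <> 0) by (intro h0; apply Hi, INR_eq; rewrite Hy Hv0; lra).
    have := Rdichotomy _ _ Hv; have := Hv0n i; rewrite ffunE; have := pos_INR (p i - y i)%N; lra.
Qed.

Lemma above_inNewton_split_point U Y (J : mi m) l :
  above (setD1 Y J) l -> (forall y, Y y -> inNewton U y) ->
  exists Lam V, 0 <= Lam /\ scaled_newton (setD1 U J) (total_weight l - Lam) V /\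
    (forall i, weighted_sum l i = Lam * INR (J i) + V i) /\
    (0 < total_weight l -> Lam < total_weight l \/ exists i, 0 < V i).
Proof.
  intros H HYU; induction H as [|[c p] l [Hc [y [[Hy Hyn] Hle]]] _ IH].
  - exists 0, (fun _ => 0); split; [lra|split; [|split]].
    + eapply scaled_newton_ext; [apply scaled_newton0|unfold total_weight; simpl; lra|reflexivity].
    + intro i; unfold weighted_sum; simpl; lra.
    + unfold total_weight; simpl; lra.
  - destruct IH as [Lam [V [H0 [HR [Hv Hs]]]]]; simpl in *.
    destruct (inNewton_split_point (HYU y Hy) Hyn Hle) as [lam [v [h0 [hR [hv hs]]]]].
    destruct (scaled_newton_ge0 HR) as [HRw HRv].
    exists (c * lam + Lam), (fun i => c * v i + V i).
    split; [nra|split; [|split]].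
    + eapply scaled_newton_ext; [apply (scaled_newtonD (scaled_newtonZ Hc hR) HR)
        |unfold total_weight; simpl; fold (total_weight l); lra|reflexivity].
    + intro i; unfold weighted_sum; simpl; fold (weighted_sum l i); rewrite Hv hv; lra.
    + unfold total_weight; simpl; fold (total_weight l); intro Hpos.
      destruct (Rle_lt_or_eq_dec 0 c Hc) as [hc|<-].
      * destruct hs as [hs|[i hi]]; [left; nra|right; exists i].
        have := HRv i; nra.
      * destruct (Hs ltac:(lra)) as [hs'|[i hi]]; [left; lra|right; exists i; lra].
Qed.

(* Writing every point of [Y \ J] as [lam * J] plus a point of [(1 - lam) N(U \ J)], a convex
   combination giving [J] turns into [(1 - Lam) J] in [(1 - Lam) N(U \ J)]; the case
   [Lam = 1] is impossible as it would force a strictly positive coordinate to vanish. *)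
Lemma Vert_sub U Y (J : mi m) :
  Vert U J -> (forall y, Y y -> inNewton U y) -> Y J -> Vert Y J.
Proof.
  intros [HUJ HnJ] HYU HYJ; split; auto; intros [l [Hl [Hw Hx]]].
  change (total_weight l = 1) in Hw.
  assert (HJ : forall i, INR (J i) = weighted_sum l i) by exact Hx.
  destruct (above_inNewton_split_point Hl HYU) as [Lam [V [H0 [HR [HV Hs]]]]].
  rewrite Hw in HR Hs.
  destruct (scaled_newton_ge0 HR) as [HRw HRv].
  destruct (Rlt_or_le Lam 1) as [hl|hl].
  - apply HnJ, inNewtonE.
    assert (Hpos : 0 <= / (1 - Lam)) by (apply Rlt_le, Rinv_0_lt_compat; lra).
    eapply scaled_newton_ext; [apply (scaled_newtonZ Hpos HR)|field; lra|].
    intro i; have := HJ i; rewrite HV => HJi; simpl.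
    replace (V i) with ((1 - Lam) * INR (J i)) by lra; field; lra.
  - destruct (Hs ltac:(lra)) as [h|[i hi]]; [lra|].
    assert (Lam = 1) by lra; subst Lam.
    have := HJ i; rewrite HV; lra.
Qed.

Lemma Vert_midpoint X (J Q1 Q2 : mi m) : Vert X J -> X Q1 -> X Q2 ->
  (forall i, (Q1 i + Q2 i)%N = (J i + J i)%N) -> Q1 = J.
Proof.
  intros [HJ Hn] H1 H2 Hs; apply NNPP; intro Hne.
  assert (Hne2 : Q2 <> J).
  { intro e; subst Q2; apply Hne; apply/ffunP => i; apply/eqP.
    by rewrite -(eqn_add2r (J i)) Hs. }
  apply Hn; exists ((/2, Q1) :: (/2, Q2) :: nil); split; [|split].
  - constructor; [|constructor; [|constructor]]; (split; [simpl; lra|]).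
    + exists Q1; split; [split|]; auto.
    + exists Q2; split; [split|]; auto.
  - simpl; lra.
  - intro i; simpl; have := f_equal INR (Hs i); rewrite !plus_INR; lra.
Qed.

Definition has_basis X :=
  exists F : seq (mi m), (forall f, f \in F -> X f) /\
    forall x, X x -> exists2 f, f \in F & forall i, (f i <= x i)%N.

Lemma has_basis_cover X Y : (forall y, Y y -> X y) ->
  (forall x, X x -> exists y, Y y /\ forall i, (y i <= x i)%N) -> has_basis Y -> has_basis X.
Proof.
  move=> HYX HXY [F [HF HF']]; exists F; split => [f /HF /HYX //|x /HXY [y [/HF' [f Hf Hfy] Hyx]]].
  by exists f => // i; exact: leq_trans (Hfy i) (Hyx i).
Qed.

Lemma has_basis1 (x0 : mi m) : has_basis (fun x => x = x0).
Proof. by exists [:: x0]; split => [f /[!inE] /eqP|x ->] //; exists x0; rewrite ?mem_head. Qed.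

Lemma has_basisU X Y : has_basis X -> has_basis Y -> has_basis (fun x => X x \/ Y x).
Proof.
  move=> [F [HF HF']] [F' [HG HG']]; exists (F ++ F'); split.
  - by move=> f; rewrite mem_cat => /orP [/HF|/HG]; [left|right].
  - by move=> x [/HF' [f Hf Hfx]|/HG' [f Hf Hfx]]; exists f; rewrite ?mem_cat ?Hf ?orbT.
Qed.

Lemma has_basis_bigcup (A : eqType) (L : seq A) (X : A -> iset m) :
  (forall a, a \in L -> has_basis (X a)) -> has_basis (fun x => exists2 a, a \in L & X a x).
Proof.
  elim: L => [|a L IH] HL.
  - by exists [::]; split => // x [].
  - apply: (has_basis_cover (Y := fun x => X a x \/ exists2 b, b \in L & X b x)).
    + by move=> x [h|[b hb h]]; [exists a; rewrite ?mem_head|exists b; rewrite // inE hb orbT].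
    + move=> x [b]; rewrite inE => /orP [/eqP -> h|hb h]; exists x; split => //; [left|right] => //.
      by exists b.
    + apply: has_basisU; [apply: HL; exact: mem_head|apply: IH => b hb; apply: HL].
      by rewrite inE hb orbT.
Qed.

(* Points of [X] not above [x0] lie in one of the slices [x i = c] with [c < x0 i]. *)
Lemma has_basis_slices (s : seq 'I_m) X :
  (forall x y, X x -> X y -> forall i, i \notin s -> x i = y i) ->
  (forall i c, i \in s -> has_basis (fun x => X x /\ x i = c)) -> has_basis X.
Proof.
  move=> Hconst Hslice; case: (classic (exists x0, X x0)) => [[x0 H0]|Hn]; last first.
    by exists [::]; split => // x Hx; exfalso; apply: Hn; exists x.
  pose L := [seq (i, c) | i <- s, c <- iota 0 (x0 i)].
  apply: (has_basis_cover
    (Y := fun x => x = x0 \/ exists2 p, p \in L & X x /\ x p.1 = p.2)).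
  - by move=> x [->|[p _ []]].
  - move=> x Hx; case: (classic (forall i, (x0 i <= x i)%N)) => Hd.
      by exists x0; split => //; left.
    have [i Hi] : exists i, (x i < x0 i)%N.
      by apply: NNPP => h; apply: Hd => i; rewrite leqNgt; apply/negP => h'; apply: h; exists i.
    exists x; split => //; right; exists (i, x i) => //.
    apply: (@allpairs_f_dep _ (fun=> nat) _ (fun i c => (i, c))); last by rewrite mem_iota.
    case Hin: (i \in s) => //; have := Hconst x0 x H0 Hx i; rewrite Hin => /(_ isT) h.
    by rewrite h ltnn in Hi.
  - apply: has_basisU; first exact: has_basis1.
    apply: has_basis_bigcup => p /allpairsPdep [i [c [Hi _ ->]]]; exact: Hslice.
Qed.

Lemma dickson_free k (s : seq 'I_m) X : (size s <= k)%N ->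
  (forall x y, X x -> X y -> forall i, i \notin s -> x i = y i) -> has_basis X.
Proof.
  elim: k s X => [|k IH] s X Hs Hconst; apply: (has_basis_slices Hconst) => i c Hi.
    by move: Hi; rewrite leqn0 size_eq0 in Hs; rewrite (eqP Hs).
  apply: (IH (filter (predC1 i) s)).
  - by rewrite -ltnS (leq_trans (size_filter_predC1 Hi)).
  - move=> x y [Hx Hxc] [Hy Hyc] j Hj; case: (eqVneq j i) => [->|hji]; first by rewrite Hxc Hyc.
    by apply: Hconst => //; apply: contra Hj => Hjs; rewrite mem_filter /= hji.
Qed.

Lemma dickson X : has_basis X.
Proof. by apply: (@dickson_free _ (enum 'I_m)) => // x y _ _ i; rewrite mem_enum. Qed.

Lemma inNewton_Vert_seq k (F : seq (mi m)) : (size F <= k)%N ->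
  forall f, f \in F -> inNewton (Vert (fun y => y \in F)) f.
Proof.
  elim: k F => [|k IH] F HF; first by case: F HF.
  case: (classic (forall f, f \in F -> Vert (fun y => y \in F) f)) => [Hall f Hf|Hn].
    exact: inNewton_self (Hall f Hf).
  have [f0 [Hf0 Hin]] : exists f0, f0 \in F /\ inNewton (setD1 (fun y => y \in F) f0) f0.
    by apply: NNPP => h; apply: Hn => f Hf; split => // h'; apply: h; exists f.
  pose F2 := filter (predC1 f0) F.
  have HF2 : (size F2 <= k)%N by rewrite -ltnS (leq_trans (size_filter_predC1 Hf0)).
  have Hin2 : inNewton (fun y => y \in F2) f0.
    by apply: (inNewton_mono _ Hin) => y [Hy Hyn]; rewrite mem_filter /= Hy andbT; apply/eqP.
  have HV v : Vert (fun y => y \in F2) v -> Vert (fun y => y \in F) v.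
    move=> Hv; apply: (Vert_sub Hv); last by case: Hv; rewrite mem_filter => /andP [].
    move=> y Hy; case: (eqVneq y f0) => [->|hne] //.
    by apply: inNewton_self; rewrite mem_filter /= hne.
  have HF2V y : y \in F2 -> inNewton (Vert (fun y => y \in F)) y.
    by move=> Hy; apply: (inNewton_mono HV); apply: IH.
  move=> f Hf; case: (eqVneq f f0) => [->|hne]; first exact: inNewton_trans Hin2 HF2V.
  by apply: HF2V; rewrite mem_filter /= hne.
Qed.

(* Reduce to a finite Dickson basis, whose non-vertices can be pruned one at a time. *)
Lemma inNewton_Vert X (x : mi m) : X x -> inNewton (Vert X) x.
Proof.
  move=> Hx; have [F [HF HF']] := dickson X; have [f Hf Hfx] := HF' x Hx.
  have H1 : inNewton (fun y => y \in F) x by exact: inNewton_dom Hf Hfx.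
  apply: (inNewton_mono _ (inNewton_trans H1 (inNewton_Vert_seq (leqnn _)))).
  move=> v Hv; apply: (Vert_sub Hv); last by case: Hv => /HF.
  by move=> y Hy; have [g Hg Hgy] := HF' y Hy; exact: inNewton_dom Hg Hgy.
Qed.

Lemma Vert_minkowski_r X Y (a b : mi m) :
  X a -> Y b -> Vert (minkowski X Y) (miadd a b) -> Vert Y b.
Proof.
  move=> Ha Hb [_ Hn]; split => // Hin; apply: Hn.
  apply: (inNewton_mono _ (inNewton_translate a Hin)) => _ [y [[Hy Hyb] ->]]; split.
  - by exists a, y.
  - by move/miaddI.
Qed.

End NewtonPolyhedra.

Section PowerSeries.
Variables (K : fieldType) (m : nat).
Local Open Scope ring_scope.
Implicit Types (f g h : ps K m) (I J : mi m).

Definition mile I J : bool := [forall i, (I i <= J i)%N].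
Definition misub J I : mi m := [ffun i => (J i - I i)%N].

Lemma mileP I J : reflect (forall i, (I i <= J i)%N) (mile I J).
Proof. exact: forallP. Qed.

Lemma misubK J I : mile I J -> misub J (misub J I) = I.
Proof. by move/mileP => h; apply/ffunP => i; rewrite !ffunE subKn. Qed.

Lemma misub_mile J I : mile (misub J I) J.
Proof. by apply/mileP => i; rewrite ffunE leq_subr. Qed.

Lemma miaddK J I : misub (miadd I J) I = J.
Proof. by apply/ffunP => i; rewrite !ffunE addKn. Qed.

Lemma mile_addr I J : mile I (miadd I J).
Proof. by apply/mileP => i; rewrite ffunE leq_addr. Qed.

Lemma misubKr J I : mile I J -> miadd I (misub J I) = J.
Proof. by move/mileP => h; apply/ffunP => i; rewrite !ffunE subnKC. Qed.

(* The index type of the sum defining [psmul] at [J] bounds every coordinate by [bnd J]. *)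
Definition bnd J := (\sum_(i < m) J i).+1.
Definition mi_of_ord N (I : {ffun 'I_m -> 'I_N}) : mi m := [ffun i => nat_of_ord (I i)].
Definition mi_box J : seq (mi m) :=
  map (@mi_of_ord (bnd J))
    (filter (fun u : {ffun 'I_m -> 'I_(bnd J)} => [forall i, (u i <= J i)%N])
       (index_enum {ffun 'I_m -> 'I_(bnd J)})).

Lemma mi_of_ord_inj N : injective (@mi_of_ord N).
Proof. by move=> I I' /ffunP h; apply/ffunP => i; apply/val_inj; move: (h i); rewrite !ffunE. Qed.

Lemma ltn_bnd J i : (J i < bnd J)%N.
Proof. by rewrite /bnd ltnS (bigD1 i) //= leq_addr. Qed.

Lemma mem_mi_box J I : (I \in mi_box J) = mile I J.
Proof.
  apply/idP/idP.
  - case/mapP => I'; rewrite mem_filter => /andP [/forallP h _] ->.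
    by apply/mileP => i; rewrite ffunE.
  - move/mileP => h; have hlt i : (I i < bnd J)%N := leq_ltn_trans (h i) (ltn_bnd J i).
    apply/mapP; exists [ffun i => (inord (I i) : 'I_(bnd J))].
    + by rewrite mem_filter mem_index_enum andbT; apply/forallP => i; rewrite ffunE inordK.
    + by apply/ffunP => i; rewrite !ffunE inordK.
Qed.

Lemma mi_box_uniq J : uniq (mi_box J).
Proof. by rewrite map_inj_uniq ?filter_uniq ?index_enum_uniq //; exact: mi_of_ord_inj. Qed.

Lemma psmulE f g J : psmul f g J = \sum_(I <- mi_box J) f I * g (misub J I).
Proof.
  rewrite /psmul /mi_box big_map big_filter; apply: eq_bigr => I _.
  by congr (_ * g _); apply/ffunP => i; rewrite !ffunE.
Qed.

Lemma perm_mi_box_misub J : perm_eq (mi_box J) (map (misub J) (mi_box J)).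
Proof.
  apply: uniq_perm; rewrite ?mi_box_uniq //.
  - rewrite map_inj_in_uniq ?mi_box_uniq // => I I'; rewrite !mem_mi_box => h1 h2 e.
    by rewrite -(misubK h1) e misubK.
  - move=> x; rewrite mem_mi_box; apply/idP/mapP => [hx|[I _ ->]]; last exact: misub_mile.
    by exists (misub J x); rewrite ?mem_mi_box ?misub_mile ?misubK.
Qed.

Lemma psmulC f g J : psmul f g J = psmul g f J.
Proof.
  rewrite !psmulE (perm_big _ (perm_mi_box_misub J)) big_map.
  by apply: eq_big_seq => I; rewrite mem_mi_box => hI; rewrite misubK // mulrC.
Qed.

Lemma psmul_single f g J I0 : mile I0 J ->
  (forall I, mile I J -> I != I0 -> f I * g (misub J I) = 0) ->
  psmul f g J = f I0 * g (misub J I0).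
Proof.
  move=> h0 h; rewrite psmulE (bigD1_seq I0) ?mi_box_uniq ?mem_mi_box //=.
  by rewrite big1_seq ?addr0 // => I /andP [hne]; rewrite mem_mi_box => hI; exact: h.
Qed.

Lemma psmul_neq0 f g J : psmul f g J != 0 ->
  exists I, [/\ mile I J, f I != 0 & g (misub J I) != 0].
Proof.
  move=> h; apply: NNPP => hn; move/eqP: h; apply.
  rewrite psmulE big1_seq // => I; rewrite mem_mi_box => hI.
  have [->|hf] := eqVneq (f I) 0; first by rewrite mul0r.
  have [->|hg] := eqVneq (g (misub J I)) 0; first by rewrite mulr0.
  by exfalso; apply: hn; exists I.
Qed.

Lemma psmul_sum_right f g h J : psmul f (psmul g h) J =
  \sum_(p <- [seq (a, b) | a <- mi_box J, b <- mi_box (misub J a)])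
    f p.1 * g p.2 * h (misub (misub J p.1) p.2).
Proof.
  rewrite psmulE big_allpairs_dep /=; apply: eq_bigr => I _.
  by rewrite psmulE mulr_sumr; apply: eq_bigr => I' _; rewrite mulrA.
Qed.

Lemma psmul_sum_left f g h J : psmul (psmul f g) h J =
  \sum_(p <- [seq (a, b) | a <- mi_box J, b <- mi_box a])
    f p.2 * g (misub p.1 p.2) * h (misub J p.1).
Proof.
  rewrite psmulE big_allpairs_dep /=; apply: eq_bigr => L _.
  by rewrite psmulE mulr_suml.
Qed.

Lemma mi_box_pairs_uniq J (F : mi m -> mi m) :
  uniq [seq (a, b) | a <- mi_box J, b <- mi_box (F a)].
Proof.
  apply: allpairs_uniq_dep => [||[a b] [c d] _ _ [-> ->]] //; first exact: mi_box_uniq.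
  by move=> I _; exact: mi_box_uniq.
Qed.

(* [(L, I)] with [I <= L <= J] corresponds to [(I, L - I)] with [I <= J] and [L - I <= J - I]. *)
Lemma perm_mi_box_pairs J :
  perm_eq [seq (a, b) | a <- mi_box J, b <- mi_box (misub J a)]
          [seq (p.2, misub p.1 p.2) | p <- [seq (a, b) | a <- mi_box J, b <- mi_box a]].
Proof.
  have HB p : p \in [seq (a, b) | a <- mi_box J, b <- mi_box a] -> mile p.2 p.1 && mile p.1 J.
    by case/allpairsPdep => L [I [hL hI ->]]; rewrite !mem_mi_box in hL hI; rewrite /= hL hI.
  apply: uniq_perm; first exact: mi_box_pairs_uniq.
  - rewrite map_inj_in_uniq ?mi_box_pairs_uniq // => [[L I] [L' I']] h1 h2 [e1 e2].
    move: (HB _ h1) (HB _ h2) => /andP [a1 _] /andP [a2 _]; rewrite /= in e1 a1 a2.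
    by subst I'; rewrite -(misubKr a1) -(misubKr a2) e2.
  - move=> q; apply/idP/idP.
    + case/allpairsPdep => I1 [L1 [h1 h2 ->]]; rewrite !mem_mi_box in h1 h2.
      apply/mapP; exists (miadd I1 L1, I1); last by rewrite /= miaddK.
      apply/allpairsPdep; exists (miadd I1 L1), I1; split; rewrite ?mem_mi_box ?mile_addr //.
      apply/mileP => i; move/mileP: h1 => /(_ i); move/mileP: h2 => /(_ i).
      by rewrite !ffunE => h2 h1; rewrite -(subnKC h1) leq_add2l.
    + case/mapP => [[L I1]] hp ->; move: (HB _ hp) => /= /andP [a1 a2].
      apply/allpairsPdep; exists I1, (misub L I1); split; rewrite // mem_mi_box.
      * apply/mileP => i; move/mileP: a1 => /(_ i); move/mileP: a2 => /(_ i) h2 h1.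
        exact: leq_trans h1 h2.
      * apply/mileP => i; rewrite !ffunE leq_sub2r //.
        by move/mileP: a2 => /(_ i).
Qed.

Lemma psmulA f g h J : psmul f (psmul g h) J = psmul (psmul f g) h J.
Proof.
  rewrite psmul_sum_right psmul_sum_left (perm_big _ (perm_mi_box_pairs J)) big_map.
  apply: eq_big_seq => -[L I] /allpairsPdep [L' [I' [hL hI [-> ->]]]] /=.
  rewrite !mem_mi_box in hL hI; congr (_ * h _); apply/ffunP => i; rewrite !ffunE.
  move/mileP: hL => /(_ i) hL; move/mileP: hI => /(_ i) hI.
  by rewrite subnBA // subnK // (leq_trans hI hL).
Qed.

Lemma psmulCA f g h : psmul f (psmul g h) = psmul g (psmul f h).
Proof.
  have mulC (u v : ps K m) : psmul u v = psmul v u.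
    by apply: functional_extensionality => J; exact: psmulC.
  have mulA (u v w : ps K m) : psmul u (psmul v w) = psmul (psmul u v) w.
    by apply: functional_extensionality => J; exact: psmulA.
  by rewrite mulA (mulC f g) -mulA.
Qed.

(* At a vertex [a + b] of [A + B] the Cauchy product has the single term [f a * g b]: any other
   pair [(I, J - I)] would make [a + b] the midpoint of [I + b] and [a + (J - I)]. *)
Lemma psmul_Vert f g (A B : iset m) a b :
  (forall x, Supp f x -> A x) -> (forall x, Supp g x -> B x) ->
  A a -> B b -> Vert (minkowski A B) (miadd a b) -> psmul f g (miadd a b) = f a * g b.
Proof.
  move=> HA HB Ha Hb HV; rewrite (@psmul_single _ _ _ a) ?mile_addr ?miaddK // => I hI hIa.
  have [->|hf] := eqVneq (f I) 0; first by rewrite mul0r.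
  have [->|hg] := eqVneq (g (misub (miadd a b) I)) 0; first by rewrite mulr0.
  exfalso; move/eqP: hIa; apply; apply: (@miaddI _ b); rewrite miaddC [miadd b a]miaddC.
  apply: (Vert_midpoint (Q2 := miadd a (misub (miadd a b) I)) HV).
  - by exists I, b; split; [apply: HA; apply/eqP|].
  - by exists a, (misub (miadd a b) I); split; [|split; [apply: HB; apply/eqP|]].
  - by move=> i; move/mileP: hI => /(_ i); rewrite !ffunE; lia.
Qed.

Section CharZero.
Hypothesis charK : [pchar K] =i pred0.

Lemma iter_psderE k N g I : exists2 c : K, c != 0 &
  iter N (psder k) g I = c * g [ffun i => (I i + (i == k) * N)%N].
Proof.
  elim: N g I => [|N IH] g I.
    by exists 1; rewrite ?oner_neq0 // mul1r; congr g; apply/ffunP => i; rewrite ffunE muln0 addn0.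
  rewrite iterSr; have [c hc ->] := IH (psder k g) I.
  exists (c * (I k + N).+1%:R).
    by rewrite mulf_neq0 // (pcharf0P _).1.
  rewrite /psder -mulrA !ffunE eqxx mul1n; congr (_ * (_ * g _)).
  by apply/ffunP => i; rewrite !ffunE; case: (i == k) => /=; lia.
Qed.

Lemma foldr_iter_psderE J f (s : seq 'I_m) I : uniq s -> exists2 c : K, c != 0 &
  foldr (fun k g => iter (J k) (psder k) g) f s I =
  c * f [ffun i => (I i + (if i \in s then J i else 0))%N].
Proof.
  elim: s I => [|k s IH] I /=.
    by exists 1; rewrite ?oner_neq0 // mul1r; congr f; apply/ffunP => i; rewrite ffunE addn0.
  case/andP => hk us; have [c1 hc1 ->] := iter_psderE k (J k) (foldr (fun k g => iter (J k) (psder k) g) f s) I.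
  have [c2 hc2 ->] := IH [ffun i => (I i + (i == k) * J k)%N] us.
  exists (c1 * c2); first by rewrite mulf_neq0.
  rewrite mulrA; congr (_ * f _); apply/ffunP => i; rewrite !ffunE inE.
  have [->|hik] := eqVneq i k; first by rewrite (negbTE hk) mul1n addn0.
  by rewrite mul0n addn0.
Qed.

Lemma psThetaE J f I : exists2 c : K, c != 0 & psTheta J f I = c * f (miadd I J).
Proof.
  rewrite /psTheta; have [c hc ->] := foldr_iter_psderE J f I (enum_uniq 'I_m).
  by exists c => //; congr (_ * f _); apply/ffunP => i; rewrite !ffunE mem_enum.
Qed.

Lemma Supp_psTheta J f I : psTheta J f I != 0 <-> ThetaTrop J (Supp f) I.
Proof.
  split.
  - have [c hc ->] := psThetaE J f I; rewrite mulf_eq0 negb_or => /andP [_ hf].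
    exists (miadd I J); split; first exact/eqP.
    split => [i|]; first by rewrite ffunE leq_addl.
    by apply/ffunP => i; rewrite !ffunE addnK.
  - move=> [s [hs [hle ->]]]; have [c hc ->] := psThetaE J f (misub s J).
    by rewrite mulf_neq0 // miaddC misubKr; [apply/eqP|apply/mileP].
Qed.

End CharZero.
End PowerSeries.

Section SumByClasses.
Variables (T : Type) (V : nmodType) (r : rel T) (F : T -> V).
Hypotheses (r_refl : reflexive r) (r_sym : symmetric r) (r_trans : transitive r).
Local Open Scope ring_scope.

Lemma big_classes_eq0 (s : seq T) :
  (forall x, \sum_(y <- s | r y x) F y = 0) -> \sum_(y <- s) F y = 0.
Proof.
  move: {2}(size s) (leqnn (size s)) => k; elim: k s => [|k IH] [|x s] //= Hs Hcl;
    rewrite ?big_nil //.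
  rewrite (bigID (r ^~ x)) /= Hcl add0r -big_filter; apply: IH.
    by rewrite /= r_refl /= size_filter (leq_trans (count_size _ _)).
  move=> z; rewrite big_filter_cond; case: (boolP (r z x)) => hzx.
    rewrite big_pred0 // => y; apply/negbTE; rewrite negb_and negbK.
    by case hyz: (r y z); rewrite ?orbT // (r_trans hyz hzx).
  rewrite -[RHS](Hcl z); apply: eq_bigl => y; case: (boolP (r y z)) => hyz; rewrite ?andbT ?andbF //.
  by apply: contra hzx => hyx; rewrite r_sym in hyz; exact: r_trans hyz hyx.
Qed.

End SumByClasses.

Section Evaluation.
Variables (K : fieldType) (m n : nat).
Local Open Scope ring_scope.
Implicit Types (phi : 'I_n -> ps K m) (M : dmonom m n) (P : dpoly K m n).

Lemma dmeval_rem phi M v : v \in M ->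
  dmeval phi M = psmul (psTheta v.2 (phi v.1)) (dmeval phi (rem v M)).
Proof.
  elim: M => [|w M IH] //=; rewrite inE => /orP [/eqP ->|hv]; first by rewrite eqxx.
  by have [->|hwv] //= := eqVneq w v; rewrite (IH hv) psmulCA.
Qed.

Lemma dmeval_perm phi M M' : perm_eq M M' -> dmeval phi M = dmeval phi M'.
Proof.
  elim: M M' => [|v M IH] M' hp; first by move: (perm_size hp) => /= /esym/size0nil ->.
  have hv : v \in M' by rewrite -(perm_mem hp) mem_head.
  rewrite (dmeval_rem phi hv) /=; congr psmul; apply: IH.
  by rewrite -(perm_cons v) (perm_trans hp (perm_to_rem hv)).
Qed.

Lemma dpevalE P phi J : dpeval P phi J = \sum_(c <- P) psmul c.1 (dmeval phi c.2) J.
Proof. by elim: P => [|c P IH]; rewrite ?big_nil // big_cons -IH. Qed.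

Lemma psmul_dcoef P M (g : ps K m) J :
  psmul (dcoef P M) g J = \sum_(c <- P | perm_eq c.2 M) psmul c.1 g J.
Proof.
  rewrite psmulE; under eq_bigr => I _ do rewrite /dcoef mulr_suml.
  by rewrite exchange_big /=; apply: eq_bigr => c _; rewrite psmulE.
Qed.

Lemma dmeval_class_sum phi P M J :
  \sum_(c <- P | perm_eq c.2 M) psmul c.1 (dmeval phi c.2) J = psmul (dcoef P M) (dmeval phi M) J.
Proof. by rewrite psmul_dcoef; apply: eq_bigr => c h; rewrite (dmeval_perm phi h). Qed.

Lemma sum_off_class_eq0 phi P M0 J :
  (forall M, ~~ perm_eq M M0 -> psmul (dcoef P M) (dmeval phi M) J = 0) ->
  \sum_(c <- P | ~~ perm_eq c.2 M0) psmul c.1 (dmeval phi c.2) J = 0.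
Proof.
  move=> Hcl; rewrite -big_filter; apply: (@big_classes_eq0 _ _ (fun c d => perm_eq c.2 d.2)).
  - by move=> c; exact: perm_refl.
  - by move=> c d; exact: perm_sym.
  - by move=> c d e; exact: perm_trans.
  move=> c; rewrite big_filter_cond; case: (boolP (perm_eq c.2 M0)) => hc.
    rewrite big_pred0 // => d; case: (boolP (perm_eq d.2 c.2)) => hd; rewrite ?andbF //.
    by rewrite (perm_trans hd hc).
  rewrite (eq_bigl (fun d => perm_eq d.2 c.2)) ?dmeval_class_sum ?Hcl //.
  move=> d; case: (boolP (perm_eq d.2 c.2)) => hd; rewrite ?andbT ?andbF //.
  by apply: contra hc; apply: perm_trans; rewrite perm_sym.
Qed.

End Evaluation.

Section TropicalSupport.
Variables (K : fieldType) (m n : nat).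
Local Open Scope ring_scope.
Implicit Types (S : 'I_n -> iset m) (M : dmonom m n) (P : dpoly K m n).

(* The Minkowski sum whose vertex set is [epsM S M]. *)
Definition monom_trop_sum S M : iset m :=
  foldr (fun v A => minkowski (ThetaTrop v.2 (S v.1)) A) (fun J => J = mi0) M.

(* The union of the sets [a_M + epsilon_M(S)], whose vertex set is [tropEval P S]. *)
Definition trop_terms P S : iset m := fun J => exists M, nzps (dcoef P M) /\ tterm P S M J.

Lemma inNewton_tterm P S M a s : Supp (dcoef P M) a -> monom_trop_sum S M s ->
  inNewton (tterm P S M) (miadd a s).
Proof. by move=> ha hs; apply: inNewton_minkowski; apply: inNewton_Vert. Qed.

Lemma Vert_tterm P S M J : Vert (trop_terms P S) J -> nzps (dcoef P M) -> tterm P S M J ->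
  Vert (tterm P S M) J.
Proof. by move=> hV hnz ht; apply: (Vert_sub hV) => // y hy; apply: inNewton_self; exists M. Qed.

Hypothesis charK : [pchar K] =i pred0.
Variable phi : 'I_n -> ps K m.
Let S : 'I_n -> iset m := fun i => Supp (phi i).

Lemma Supp_dmeval M B : dmeval phi M B != 0 -> monom_trop_sum S M B.
Proof.
  elim: M B => [|v M IH] B /=; first by rewrite /ps1; case: (eqVneq B mi0) => // _; rewrite eqxx.
  case/psmul_neq0 => I [hI h1 h2]; exists I, (misub B I); split.
  - exact/(Supp_psTheta charK).
  - by split; [exact: IH|rewrite misubKr].
Qed.

Lemma dmeval_Vert_neq0 M B : Vert (monom_trop_sum S M) B -> dmeval phi M B != 0.
Proof.
  elim: M B => [|v M IH] B.
    by move=> [/= ->]; rewrite /ps1 eqxx oner_neq0.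
  move=> hV; case: (hV) => -[b [B1 [hb [hB1 eB]]]] _; subst B.
  rewrite /= (psmul_Vert (A := ThetaTrop v.2 (S v.1)) (B := monom_trop_sum S M)) //.
  - rewrite mulf_neq0 //; first exact/(Supp_psTheta charK).
    exact/IH/(Vert_minkowski_r hb hB1).
  - by move=> x /eqP /(Supp_psTheta charK).
  - by move=> x /eqP /Supp_dmeval.
Qed.

Lemma term_neq0_at_Vert P M J : Vert (trop_terms P S) J -> nzps (dcoef P M) -> tterm P S M J ->
  psmul (dcoef P M) (dmeval phi M) J != 0.
Proof.
  move=> hV hnz ht; case: (ht) => a [b [[ha _] [[hb hbV] eJ]]]; subst J.
  pose X : iset m := minkowski (Supp (dcoef P M)) (monom_trop_sum S M).
  have hX : Vert X (miadd a b).
    apply: (Vert_sub hV); last by exists a, b.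
    move=> _ [a' [s' [ha' [hs' ->]]]].
    by apply: (inNewton_mono _ (inNewton_tterm ha' hs')) => z hz; exists M.
  rewrite (psmul_Vert _ _ ha hb hX) //; last by move=> x /eqP /Supp_dmeval.
  by rewrite mulf_neq0 //; [exact/eqP|exact: dmeval_Vert_neq0].
Qed.

Lemma Vert_of_term_neq0 P M J : Vert (trop_terms P S) J ->
  psmul (dcoef P M) (dmeval phi M) J != 0 -> nzps (dcoef P M) /\ Vert (tterm P S M) J.
Proof.
  move=> hV /psmul_neq0 [I [hI h1 h2]].
  have hnz : nzps (dcoef P M) by exists I; apply/eqP.
  split => //; apply: (Vert_tterm hV hnz).
  have hin : inNewton (tterm P S M) J.
    by rewrite -(misubKr hI); apply: inNewton_tterm; [exact/eqP|exact: Supp_dmeval].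
  apply: NNPP => hn; case: hV => _; apply.
  by apply: (inNewton_mono _ hin) => z hz; split; [exists M|move=> e; subst z].
Qed.

Theorem tropSol_of_root P : (forall J, dpeval P phi J = 0) -> tropSol P S.
Proof.
  move=> Hroot J hV; have [[M0 [hnz0 ht0]] _] := hV.
  have h0 := term_neq0_at_Vert hV hnz0 ht0.
  have [M1 [hM1 h1]] : exists M1, ~~ perm_eq M1 M0 /\ psmul (dcoef P M1) (dmeval phi M1) J != 0.
    apply: NNPP => hn; move/eqP: h0; apply.
    have := Hroot J; rewrite dpevalE (bigID (fun c => perm_eq c.2 M0)) /= dmeval_class_sum.
    rewrite sum_off_class_eq0 ?addr0 // => M hM.
    by apply/eqP; apply: contraT => h; exfalso; apply: hn; exists M.
  have [hnz1 hV1] := Vert_of_term_neq0 hV h1.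
  exists M0, M1; split; first by rewrite perm_sym.
  by do 3!split => //; exact: Vert_tterm hV hnz0 ht0.
Qed.

End TropicalSupport.

Theorem mainTheorem10 (K : closedFieldType) (charK : [pchar K]%R =i pred0)
  (m n : nat) (hm : (0 < m)%N) (hn : (0 < n)%N)
  (G : dpoly K m n -> Prop) (HG : is_diff_ideal G)
  (phi : 'I_n -> ps K m)
  (Hsol : forall P, G P -> forall J, dpeval P phi J = 0%R) :
  forall P, G P -> tropSol P (fun i => Supp (phi i)).
Proof. by move=> P HP; apply: (tropSol_of_root charK); exact: Hsol. Qed.
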